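(* Let $\lambda$ be a pre-specified threshold, and let $\Pi^*_\lambda$ denote the set of solutions of the constrained problem $$\max_{\pi}\ R(\pi)\quad\text{subject to}\quad \mathrm{THR}(\pi)\le \lambda ,$$ where the maximum is over all individualized treatment rules $\pi:\mathcal X\to\{0,1\}$. (a) If $\lambda<\mathbb{E}[\mathrm{THR}(X)\cdot \mathbb{I}\{\tau(X)>0\}]$, then the oracle rule is $$\pi^*_\lambda(x)=\mathbb{I}\{\tau(x)-\beta^*\,\mathrm{THR}(x)>0\},$$ where $\beta^*$ satisfies $$\mathbb{E}\big[\mathrm{THR}(X)\cdot \mathbb{I}\{\tau(X)-\beta^*\,\mathrm{THR}(X)>0\}\big]=\lambda .$$ That is, this rule belongs to $\Pi^*_\lambda$. (b) If $\lambda\ge \mathbb{E}[\mathrm{THR}(X)\cdot \mathbb{I}\{\tau(X)>0\}]$, then the oracle rule is $\pi^*_\lambda(x)=\mathbb{I}\{\tau(x)>0\}$. This is the same rule that maximizes $R(\pi)$ when no harm constraint is imposed.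
   Context: We work in the potential outcomes framework with a superpopulation of random tuples $\{X,A,Y(1),Y(0)\}$. Here $X\in\mathcal X$ are pre-treatment covariates, $A\in\{0,1\}$ is a binary treatment, and $Y(a)\in\{0,1\}$ is the binary potential outcome under treatment $a$; the value $1$ is the favorable outcome. Notation: - Conditional average treatment effect: $\tau(x)=\mathbb{E}\{Y(1)-Y(0)\mid X=x\}$. - Conditional treatment harm rate: $\mathrm{THR}(x)=\mathbb{P}(Y(0)=1,Y(1)=0\mid X=x)$. - An individualized treatment rule (ITR) is any map $\pi:\mathcal X\to\{0,1\}$. - Reward of an ITR: $R(\pi)=\mathbb{E}[\pi(X)Y(1)+\{1-\pi(X)\}Y(0)]$. - Harm rate of an ITR: $\mathrm{THR}(\pi)=\mathbb{E}\{\mathrm{THR}(X)\pi(X)\}$. *)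

From HB Require Import structures.
From mathcomp Require Import all_boot all_order all_algebra.
From mathcomp Require Import all_classical all_reals all_analysis.
Set Implicit Arguments. Unset Strict Implicit. Unset Printing Implicit Defensive.
Import Order.TTheory GRing.Theory Num.Theory.
Local Open Scope classical_set_scope.
Local Open Scope ring_scope.

Section Defs.
Context (R : realType) (d : measure_display) (Omega : measurableType d)
  (P : probability Omega R) (dX : measure_display) (Xs : measurableType dX)
  (X : Omega -> Xs).

(* f is a version of the conditional expectation E[Z | X = x]:
   f is measurable and E[Z 1{X in B}] = E[f(X) 1{X in B}] for every
   measurable B. *)
Definition is_cond_exp (Z : Omega -> R) (f : Xs -> R) : Prop :=
  measurable_fun setT f /\
  forall B : set Xs, measurable B ->
    (\int[P]_(w in X @^-1` B) (Z w)%:E =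
     \int[P]_(w in X @^-1` B) (f (X w))%:E)%E.

Definition itr_measurable (pi : Xs -> bool) : Prop :=
  measurable (pi @^-1` [set true]).

Definition reward (Y1 Y0 : Omega -> R) (pi : Xs -> bool) : \bar R :=
  (\int[P]_w ((pi (X w))%:R * Y1 w + (1 - (pi (X w))%:R) * Y0 w)%:E)%E.

Definition harm_rate (THR : Xs -> R) (pi : Xs -> bool) : \bar R :=
  (\int[P]_w (THR (X w) * (pi (X w))%:R)%:E)%E.

Definition constrained_optimal (Y1 Y0 : Omega -> R) (THR : Xs -> R)
  (lam : R) (pi : Xs -> bool) : Prop :=
  itr_measurable pi /\ (harm_rate THR pi <= lam%:E)%E /\
  forall pi' : Xs -> bool, itr_measurable pi' ->
    (harm_rate THR pi' <= lam%:E)%E ->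
    (reward Y1 Y0 pi' <= reward Y1 Y0 pi)%E.

End Defs.

From HB Require Import structures.
From mathcomp Require Import all_boot all_order all_algebra.
From mathcomp Require Import all_classical all_reals all_analysis.
From mathcomp Require Import ring lra.
Set Implicit Arguments.
Unset Strict Implicit.
Unset Printing Implicit Defensive.
Import Order.TTheory GRing.Theory Num.Theory.
Local Open Scope classical_set_scope.
Local Open Scope ring_scope.

(* For a measurable rule pi the conditional-expectation property of tau gives
   R(pi) = E[Y(0)] + E[pi(X) tau(X)], so only the gain E[pi(X) tau(X)] matters.
   For every beta the rule 1{tau - beta THR > 0} maximises the Lagrangian
   E[pi(X) (tau(X) - beta THR(X))] pointwise; if beta >= 0 and the rule spends
   the whole harm budget lambda, every feasible rule therefore has a smaller gain.
   In case (a), beta >= 0 because the harm rate of 1{tau - beta THR > 0} is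
   nonincreasing in beta and already exceeds lambda at beta = 0; case (b) is
   beta = 0, where the constraint is inactive. *)

Lemma EFin_Rintegral (R : realType) d (T : measurableType d)
  (mu : {measure set T -> \bar R}) (D : set T) (f : T -> R) :
  measurable D -> mu.-integrable D (EFin \o f) ->
  (\int[mu]_(x in D) f x)%:E = (\int[mu]_(x in D) (f x)%:E)%E.
Proof.
by move=> mD intf; rewrite /Rintegral fineK // (integrable_fin_num mD intf).
Qed.

Lemma integrableZl_EFin (R : realType) d (T : measurableType d)
  (mu : {measure set T -> \bar R}) (D : set T) (k : R) (f : T -> R) :
  measurable D -> mu.-integrable D (EFin \o f) ->
  mu.-integrable D (EFin \o (fun x => k * f x)).
Proof.
move=> mD intf; apply: (eq_integrable mD _ _ _ (integrableZl mD k intf)).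
by move=> x _; rewrite /= EFinM.
Qed.

Lemma integrable_bounded (R : realType) d (T : measurableType d)
  (mu : {finite_measure set T -> \bar R}) (f : T -> R) (M : R) :
  measurable_fun setT f -> (forall x, `|f x| <= M) ->
  mu.-integrable setT (EFin \o f).
Proof.
move=> mf fM; have intM := finite_measure_integrable_cst mu M measurableT.
apply: (le_integrable _ _ _ intM) => //.
  exact/measurable_realfun.measurable_EFinP.
by move=> x _; rewrite /= lee_fin (le_trans (fM x)) // ler_norm.
Qed.

Lemma ler_natb_mul_gt0 (R : realDomainType) (b : bool) (a : R) :
  b%:R * a <= (0 < a)%R%:R * a.
Proof. by case: b; case: ltP => /= a0; rewrite ?mul1r ?mul0r // ltW. Qed.

Definition penalized_rule (R : numDomainType) (T : Type) (tau h : T -> R)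
  (beta : R) (x : T) : bool := 0 < tau x - beta * h x.

Lemma penalized_rule0 (R : numDomainType) (T : Type) (tau h : T -> R) :
  penalized_rule tau h 0 = fun x => 0 < tau x.
Proof. by apply/funext => x; rewrite /penalized_rule mul0r subr0. Qed.

Section individualized_treatment_rules.
Variables (R : realType) (d : measure_display) (Omega : measurableType d).
Variable P : probability Omega R.
Variables (dX : measure_display) (Xs : measurableType dX).
Variable X : Omega -> Xs.
Hypothesis mX : measurable_fun setT X.

Lemma itr_measurable_gt0 (g : Xs -> R) :
  measurable_fun setT g -> itr_measurable (fun x => 0 < g x).
Proof.
move=> mg; rewrite /itr_measurable -[_ @^-1` _]setTI.
have := measurable_realfun.measurable_fun_ltr (measurable_cst (0 : R)) mg.
by move=> /(_ measurableT [set true]); apply.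
Qed.

Lemma itr_indicE (pi : Xs -> bool) (w : Omega) :
  (pi (X w))%:R = \1_(X @^-1` (pi @^-1` [set true])) w :> R.
Proof.
rewrite indicE; case: (boolP (w \in _)) => [|/negP]; rewrite inE /preimage /=.
  by move=> ->.
by case: (pi (X w)).
Qed.

Lemma measurable_itr (pi : Xs -> bool) :
  itr_measurable pi -> measurable_fun setT (fun w => (pi (X w))%:R : R).
Proof.
move=> mpi; rewrite (funext (itr_indicE pi)).
apply: measurable_realfun.measurable_indic.
by rewrite -[X @^-1` _]setTI; exact: mX.
Qed.

Lemma integrable_itrM (pi : Xs -> bool) (g : Omega -> R) :
  itr_measurable pi -> P.-integrable setT (EFin \o g) ->
  P.-integrable setT (EFin \o (fun w => (pi (X w))%:R * g w)).
Proof.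
move=> mpi intg; apply: (le_integrable _ _ _ intg) => //.
  apply/measurable_realfun.measurable_EFinP.
  apply: measurable_realfun.measurable_funM; first exact: measurable_itr.
  exact/measurable_realfun.measurable_EFinP/(measurable_int _ intg).
move=> w _; rewrite /= lee_fin normrM.
by case: (pi (X w)); rewrite ?normr1 ?normr0 ?mul1r ?mul0r.
Qed.

Lemma integrable_cond_exp (Z : Omega -> R) (f : Xs -> R) :
  P.-integrable setT (EFin \o Z) -> is_cond_exp P X Z f ->
  P.-integrable setT (EFin \o (f \o X)).
Proof.
move=> intZ [mf ceZ]; apply/integrableP; split.
  exact/measurable_realfun.measurable_EFinP/measurableT_comp.
rewrite integral_fin_num_abs //; last exact: measurableT_comp.
have := ceZ setT measurableT; rewrite preimage_setT => <-.
exact: integrable_fin_num.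
Qed.

Lemma integral_itrM (pi : Xs -> bool) (g : Omega -> R) :
  (\int[P]_w ((pi (X w))%:R * g w)%:E =
   \int[P]_(w in X @^-1` (pi @^-1` [set true])) (g w)%:E)%E.
Proof.
rewrite [RHS]integral_mkcond; apply: eq_integral => w _.
by rewrite patchE itr_indicE indicE; case: (w \in _); rewrite ?mul1r ?mul0r.
Qed.

Lemma Rintegral_itrM_cond_exp (pi : Xs -> bool) (Z : Omega -> R)
  (f : Xs -> R) :
  itr_measurable pi -> is_cond_exp P X Z f ->
  \int[P]_w ((pi (X w))%:R * Z w) = \int[P]_w ((pi (X w))%:R * f (X w)).
Proof. by move=> mpi [_ ceZ]; rewrite /Rintegral !integral_itrM ceZ. Qed.

Lemma Rintegral_itrM_le_gt0 (pi : Xs -> bool) (g : Xs -> R) :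
  itr_measurable pi -> measurable_fun setT g ->
  P.-integrable setT (EFin \o (g \o X)) ->
  \int[P]_w ((pi (X w))%:R * g (X w)) <=
  \int[P]_w ((0 < g (X w))%R%:R * g (X w)).
Proof.
move=> mpi mg intg; apply: le_Rintegral => //.
- exact: (integrable_itrM (g := g \o X)).
- exact: (integrable_itrM (g := g \o X) (itr_measurable_gt0 mg)).
- by move=> w _; exact: ler_natb_mul_gt0.
Qed.

End individualized_treatment_rules.

Section harm_constrained_rules.
Variables (R : realType) (d : measure_display) (Omega : measurableType d).
Variable P : probability Omega R.
Variables (dX : measure_display) (Xs : measurableType dX).
Variables (X : Omega -> Xs) (Y1 Y0 : Omega -> R) (tau THR : Xs -> R).
Hypothesis mX : measurable_fun setT X.
Hypotheses (mY1 : measurable_fun setT Y1) (mY0 : measurable_fun setT Y0).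
Hypothesis Y1_01 : forall w, Y1 w = 0 \/ Y1 w = 1.
Hypothesis Y0_01 : forall w, Y0 w = 0 \/ Y0 w = 1.
Hypothesis tau_ce : is_cond_exp P X (fun w => Y1 w - Y0 w) tau.
Hypothesis THR_ce : is_cond_exp P X (fun w => Y0 w * (1 - Y1 w)) THR.

Local Notation gain pi := (\int[P]_w ((pi (X w))%:R * tau (X w))).
Local Notation harm pi := (\int[P]_w ((pi (X w))%:R * THR (X w))).
Local Notation pen_rule beta := (penalized_rule tau THR beta).

Let integrable_Y0 : P.-integrable setT (EFin \o Y0).
Proof.
apply: (integrable_bounded _ mY0) => w.
by case: (Y0_01 w) => ->; rewrite ?normr0 ?normr1.
Qed.

Let integrable_effect : P.-integrable setT (EFin \o (fun w => Y1 w - Y0 w)).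
Proof.
apply: (integrable_bounded _ (M := 1)).
  exact: measurable_realfun.measurable_funB.
by move=> w; case: (Y1_01 w) => ->; case: (Y0_01 w) => ->;
  rewrite ?subrr ?subr0 ?sub0r ?normrN ?normr0 ?normr1.
Qed.

Let integrable_tau : P.-integrable setT (EFin \o (tau \o X)).
Proof. exact: (integrable_cond_exp mX integrable_effect tau_ce). Qed.

Let integrable_THR : P.-integrable setT (EFin \o (THR \o X)).
Proof.
apply: (integrable_cond_exp mX _ THR_ce).
apply: (integrable_bounded _ (M := 1)).
  apply: measurable_realfun.measurable_funM => //.
  exact: measurable_realfun.measurable_funB.
by move=> w; case: (Y1_01 w) => ->; case: (Y0_01 w) => ->;
  rewrite ?subrr ?subr0 ?mul0r ?mul1r ?normr0 ?normr1.
Qed.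

Lemma reward_itrE pi : itr_measurable pi ->
  reward P X Y1 Y0 pi = (\int[P]_w Y0 w + gain pi)%:E.
Proof.
move=> mpi; rewrite -(Rintegral_itrM_cond_exp mpi tau_ce).
have int_gain := integrable_itrM mX mpi integrable_effect.
rewrite -RintegralD // EFin_Rintegral //; last first.
  exact: (integrableD measurableT integrable_Y0 int_gain).
by apply: eq_integral => w _; congr EFin; ring.
Qed.

Lemma harm_rateE pi : itr_measurable pi -> harm_rate P X THR pi = (harm pi)%:E.
Proof.
move=> mpi; rewrite /harm_rate; under eq_integral do rewrite mulrC.
by rewrite EFin_Rintegral //; exact: integrable_itrM.
Qed.

Lemma reward_le pi pi' : itr_measurable pi -> itr_measurable pi' ->
  gain pi <= gain pi' -> (reward P X Y1 Y0 pi <= reward P X Y1 Y0 pi')%E.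
Proof. by move=> mpi mpi' gain_le; rewrite !reward_itrE // lee_fin lerD2l. Qed.

Let measurable_tau : measurable_fun setT tau := tau_ce.1.
Let measurable_THR : measurable_fun setT THR := THR_ce.1.

Let measurable_penalized beta :
  measurable_fun setT (fun x => tau x - beta * THR x).
Proof.
apply: measurable_realfun.measurable_funB => //.
exact: measurable_realfun.measurable_funM.
Qed.

Let itr_penalized_rule beta : itr_measurable (pen_rule beta).
Proof. exact: itr_measurable_gt0. Qed.

Lemma harm_penalized_rule_nonincreasing beta beta' :
  beta <= beta' -> harm (pen_rule beta') <= harm (pen_rule beta).
Proof.
move=> le_beta; apply: le_Rintegral => //; try exact: integrable_itrM.
move=> w _; rewrite /penalized_rule.
by case: ltP => h'; case: ltP => h; rewrite ?mul1r ?mul0r //; nra.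
Qed.

Lemma penalized_rule_lagrangian_ge beta pi : itr_measurable pi ->
  gain pi - beta * harm pi <=
  gain (pen_rule beta) - beta * harm (pen_rule beta).
Proof.
have lagrangianE rho : itr_measurable rho -> gain rho - beta * harm rho =
    \int[P]_w ((rho (X w))%:R * (tau (X w) - beta * THR (X w))).
  move=> mrho; rewrite -RintegralZl //; last exact: integrable_itrM.
  rewrite -RintegralB //; first by apply: eq_Rintegral => w _; ring.
    exact: integrable_itrM.
  exact/integrableZl_EFin/integrable_itrM.
move=> mpi; rewrite !lagrangianE //.
apply: (Rintegral_itrM_le_gt0 mX (g := fun x => tau x - beta * THR x)) => //.
have int_penalty := integrableZl_EFin beta measurableT integrable_THR.
exact: (integrableB measurableT integrable_tau int_penalty).
Qed.

Lemma penalized_rule_optimal beta pi : 0 <= beta -> itr_measurable pi ->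
  harm pi <= harm (pen_rule beta) -> gain pi <= gain (pen_rule beta).
Proof.
move=> beta_ge0 mpi harm_le; have := penalized_rule_lagrangian_ge beta mpi.
by nra.
Qed.

Lemma positive_effect_rule_optimal pi : itr_measurable pi ->
  (reward P X Y1 Y0 pi <= reward P X Y1 Y0 (fun x => (0 < tau x)%R))%E.
Proof.
move=> mpi; rewrite -(penalized_rule0 tau THR); apply: reward_le => //.
by have := penalized_rule_lagrangian_ge 0 mpi; rewrite !mul0r !subr0.
Qed.

Lemma positive_effect_rule_constrained_optimal lam :
  (harm_rate P X THR (fun x => (0 < tau x)%R) <= lam%:E)%E ->
  constrained_optimal P X Y1 Y0 THR lam (fun x => (0 < tau x)%R).
Proof.
move=> harm_le; split; first exact: itr_measurable_gt0.
by split=> // pi mpi _; exact: positive_effect_rule_optimal.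
Qed.

Lemma penalized_rule_constrained_optimal lam beta :
  (lam%:E < harm_rate P X THR (fun x => (0 < tau x)%R))%E ->
  harm_rate P X THR (pen_rule beta) = lam%:E ->
  constrained_optimal P X Y1 Y0 THR lam (pen_rule beta).
Proof.
rewrite -(penalized_rule0 tau THR) => harm0_gt harm_beta.
have beta_ge0 : 0 <= beta.
  rewrite leNgt; apply/negP => /ltW/harm_penalized_rule_nonincreasing.
  rewrite -lee_fin -harm_rateE // -harm_rateE // harm_beta.
  by move=> /(lt_le_trans harm0_gt); rewrite ltxx.
split; first exact: itr_penalized_rule.
split; first by rewrite harm_beta.
move=> pi mpi; rewrite -harm_beta harm_rateE // harm_rateE // lee_fin.
move=> harm_le.
apply: reward_le => //; exact: penalized_rule_optimal.
Qed.

End harm_constrained_rules.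

Theorem theorem1 (R : realType) (d : measure_display) (Omega : measurableType d)
  (P : probability Omega R) (dX : measure_display) (Xs : measurableType dX)
  (X : Omega -> Xs) (Y1 Y0 : Omega -> R) (tau THR : Xs -> R) (lam : R) :
  measurable_fun setT X ->
  measurable_fun setT Y1 -> measurable_fun setT Y0 ->
  (forall w, Y1 w = 0 \/ Y1 w = 1) ->
  (forall w, Y0 w = 0 \/ Y0 w = 1) ->
  is_cond_exp P X (fun w => Y1 w - Y0 w) tau ->
  is_cond_exp P X (fun w => Y0 w * (1 - Y1 w)) THR ->
  ((lam%:E < harm_rate P X THR (fun x => (0 < tau x)%R))%E ->
     forall beta : R,
       harm_rate P X THR (fun x => (0 < tau x - beta * THR x)%R) = lam%:E ->
       constrained_optimal P X Y1 Y0 THR lam (fun x => (0 < tau x - beta * THR x)%R))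
  /\
  ((lam%:E >= harm_rate P X THR (fun x => (0 < tau x)%R))%E ->
     constrained_optimal P X Y1 Y0 THR lam (fun x => (0 < tau x)%R) /\
     forall pi : Xs -> bool, itr_measurable pi ->
       (reward P X Y1 Y0 pi <= reward P X Y1 Y0 (fun x => (0 < tau x)%R))%E).
Proof.
move=> mX mY1 mY0 Y1_01 Y0_01 tau_ce THR_ce.
split=> [harm0_gt beta|harm0_le].
  exact: (penalized_rule_constrained_optimal mX mY1 mY0 Y1_01 Y0_01
            tau_ce THR_ce harm0_gt).
split; last exact: (positive_effect_rule_optimal mX mY1 mY0 Y1_01 Y0_01
                      tau_ce THR_ce).
exact: (positive_effect_rule_constrained_optimal mX mY1 mY0 Y1_01 Y0_01
          tau_ce THR_ce).
Qed.
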